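(* Let $\mathfrak A$ be an $L$-structure and $a,b,c,d\in A$. (1) Let $t(x,y)$ be a c-term. If $t^{\mathfrak A}(a,b)=t^{\mathfrak A}(c,d)$ and $t^{\mathfrak A}(a,b)\neq t^{\mathfrak A}(c,d')$ for all $d'\in A$ with $d'\neq d$, then $\mathfrak A\models a\to b:\cdot\, c\to d$. (2) Let $t_a,t_b,t_c,t_d$ be c-terms such that $t_a^{\mathfrak A}(a,b)=t_a^{\mathfrak A}(c,d)$ and $t_a^{\mathfrak A}(a',b)\neq t_a^{\mathfrak A}(c,d)$ for all $a'\neq a$; $t_b^{\mathfrak A}(a,b)=t_b^{\mathfrak A}(c,d)$ and $t_b^{\mathfrak A}(a,b')\neq t_b^{\mathfrak A}(c,d)$ for all $b'\neq b$; $t_c^{\mathfrak A}(a,b)=t_c^{\mathfrak A}(c,d)$ and $t_c^{\mathfrak A}(a,b)\neq t_c^{\mathfrak A}(c',d)$ for all $c'\neq c$; $t_d^{\mathfrak A}(a,b)=t_d^{\mathfrak A}(c,d)$ and $t_d^{\mathfrak A}(a,b)\neq t_d^{\mathfrak A}(c,d')$ for all $d'\neq d$. Then $\mathfrak A\models a:b::c:d$.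
   Context: A c-term is an $L$-term containing both variables $x$ and $y$ (and no others); $t^{\mathfrak A}$ is the induced term function. A c-formula is a conjunctive $L$-formula (built from atomic formulas using only $\wedge,\exists,\forall$) with free variables exactly $x,y$ whose dependency graph (vertices: its variables; edge $\{w,z\}$ iff $w,z$ occur together in an atomic subformula) is connected; elements of $A$ may be used as parameters (e.g. the formula $t(x,y)=t^{\mathfrak A}(a,b)$ counts as a c-formula). $\uparrow_{\mathfrak A}(a\to b)=\{\alpha\text{ c-formula}:\mathfrak A\models\alpha(a,b)\}$; $\uparrow_{\mathfrak A}(a\to b:\cdot\, c\to d)=\uparrow_{\mathfrak A}(a\to b)\cap\uparrow_{\mathfrak A}(c\to d)$. A c-formula is trivial in $\mathfrak A$ iff it lies in $\uparrow_{\mathfrak A}(a\to b:\cdot\, c\to d)$ for all $a,b,c,d\in A$; $\emptyset_{\mathfrak A}$ is the set of these. $\mathfrak A\models a\to b:\cdot\, c\to d$ iff either $\uparrow_{\mathfrak A}(a\to b)\cup\uparrow_{\mathfrak A}(c\to d)$ consists only of trivial formulas, or $\uparrow_{\mathfrak A}(a\to b:\cdot\, c\to d)$ contains a non-trivial formula and for every $d'\in A$, $\emptyset_{\mathfrak A}\subsetneq\uparrow(a\to b:\cdot\, c\to d)\subseteq\uparrow(a\to b:\cdot\, c\to d')$ implies $\emptyset_{\mathfrak A}\subsetneq\uparrow(a\to b:\cdot\, c\to d')\subseteq\uparrow(a\to b:\cdot\, c\to d)$. $\mathfrak A\models a:b::c:d$ iff $\mathfrak A\models a\to b:\cdot\,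 c\to d$, $b\to a:\cdot\, d\to c$, $c\to d:\cdot\, a\to b$ and $d\to c:\cdot\, b\to a$. *)

From Stdlib Require Import Relations Relation_Operators.
From Stdlib Require Vectors.Fin.

Set Implicit Arguments.

(* A first-order signature: function symbols and relation symbols with arities
   (constants are function symbols of arity 0). *)
Record signature := {
  fsym : Type; farity : fsym -> nat;
  rsym : Type; rarity : rsym -> nat }.

Record structure (L : signature) := {
  carrier :> Type;
  fint : forall f : fsym L, (Fin.t (farity L f) -> carrier) -> carrier;
  rint : forall r : rsym L, (Fin.t (rarity L r) -> carrier) -> Prop }.

Inductive term (L : signature) (P : Type) : Type :=
| Var : nat -> term L P
| Par : P -> term L P
| App : forall f : fsym L, (Fin.t (farity L f) -> term L P) -> term L P.
Arguments Var {L P}. Arguments Par {L P}. Arguments App {L P}.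

Definition vx : nat := 0.
Definition vy : nat := 1.

Fixpoint occ {L P} (v : nat) (t : term L P) : Prop :=
  match t with
  | Var n => n = v
  | Par _ => False
  | App f args => exists i, occ v (args i)
  end.

Fixpoint noparam {L P} (t : term L P) : Prop :=
  match t with
  | Var _ => True
  | Par _ => False
  | App f args => forall i, noparam (args i)
  end.

Fixpoint eval {L} (M : structure L) (rho : nat -> M) (t : term L M) : M :=
  match t with
  | Var n => rho n
  | Par p => p
  | App f args => fint M f (fun i => eval M rho (args i))
  end.

Inductive cformula (L : signature) (P : Type) : Type :=
| FEq  : term L P -> term L P -> cformula L P
| FRel : forall r : rsym L, (Fin.t (rarity L r) -> term L P) -> cformula L P
| FAnd : cformula L P -> cformula L P -> cformula L P
| FEx  : nat -> cformula L P -> cformula L P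
| FAll : nat -> cformula L P -> cformula L P.
Arguments FEq {L P}. Arguments FRel {L P}. Arguments FAnd {L P}.
Arguments FEx {L P}. Arguments FAll {L P}.

Fixpoint free {L P} (v : nat) (phi : cformula L P) : Prop :=
  match phi with
  | FEq t1 t2 => occ v t1 \/ occ v t2
  | FRel r args => exists i, occ v (args i)
  | FAnd p q => free v p \/ free v q
  | FEx n p => v <> n /\ free v p
  | FAll n p => v <> n /\ free v p
  end.

(* all variables of the formula (vertices of the dependency graph) *)
Fixpoint fvars {L P} (v : nat) (phi : cformula L P) : Prop :=
  match phi with
  | FEq t1 t2 => occ v t1 \/ occ v t2
  | FRel r args => exists i, occ v (args i)
  | FAnd p q => fvars v p \/ fvars v q
  | FEx n p => v = n \/ fvars v p
  | FAll n p => v = n \/ fvars v p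
  end.

(* v and w occur together in some atomic subformula (edge of the dependency graph) *)
Fixpoint together {L P} (v w : nat) (phi : cformula L P) : Prop :=
  match phi with
  | FEq t1 t2 => (occ v t1 \/ occ v t2) /\ (occ w t1 \/ occ w t2)
  | FRel r args => (exists i, occ v (args i)) /\ (exists i, occ w (args i))
  | FAnd p q => together v w p \/ together v w q
  | FEx _ p => together v w p
  | FAll _ p => together v w p
  end.

Definition dep_connected {L P} (phi : cformula L P) : Prop :=
  forall v w, fvars v phi -> fvars w phi ->
    clos_refl_trans nat (fun u z => together u z phi) v w.

Definition upd {A : Type} (rho : nat -> A) (n : nat) (a : A) : nat -> A :=
  fun m => if Nat.eqb m n then a else rho m.

Fixpoint sat {L} (M : structure L) (rho : nat -> M) (phi : cformula L M) : Prop :=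
  match phi with
  | FEq t1 t2 => eval M rho t1 = eval M rho t2
  | FRel r args => rint M r (fun i => eval M rho (args i))
  | FAnd p q => sat M rho p /\ sat M rho q
  | FEx n p => exists a : M, sat M (upd rho n a) p
  | FAll n p => forall a : M, sat M (upd rho n a) p
  end.

(* valuation x := a, y := b (other variables irrelevant for c-formulas) *)
Definition env {A : Type} (a b : A) : nat -> A :=
  fun n => match n with 0 => a | _ => b end.

Definition cterm {L} (M : structure L) (t : term L M) : Prop :=
  noparam t /\ (forall v, occ v t <-> v = vx \/ v = vy).

Definition tA {L} (M : structure L) (t : term L M) (a b : M) : M := eval M (env a b) t.

(* c-formula: conjunctive, free variables exactly x,y, connected dependency graph;
   parameters from M allowed *)
Definition is_cformula {L} (M : structure L) (phi : cformula L M) : Prop :=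
  (forall v, free v phi <-> v = vx \/ v = vy) /\ dep_connected phi.

Definition up {L} (M : structure L) (a b : M) (phi : cformula L M) : Prop :=
  is_cformula M phi /\ sat M (env a b) phi.

Definition up2 {L} (M : structure L) (a b c d : M) (phi : cformula L M) : Prop :=
  up M a b phi /\ up M c d phi.

Definition trivialf {L} (M : structure L) (phi : cformula L M) : Prop :=
  is_cformula M phi /\ forall a b c d : M, up2 M a b c d phi.

Definition subsetf {L} (M : structure L) (X Y : cformula L M -> Prop) : Prop :=
  forall phi, X phi -> Y phi.

Definition ssubsetf {L} (M : structure L) (X Y : cformula L M -> Prop) : Prop :=
  subsetf M X Y /\ ~ subsetf M Y X.

Definition arrow_prop {L} (M : structure L) (a b c d : M) : Prop :=
  (forall phi, up M a b phi \/ up M c d phi -> trivialf M phi)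
  \/
  ((exists phi, up2 M a b c d phi /\ ~ trivialf M phi) /\
   forall d' : M,
     (ssubsetf M (trivialf M) (up2 M a b c d) /\
      subsetf M (up2 M a b c d) (up2 M a b c d')) ->
     (ssubsetf M (trivialf M) (up2 M a b c d') /\
      subsetf M (up2 M a b c d') (up2 M a b c d))).

Definition analogy {L} (M : structure L) (a b c d : M) : Prop :=
  arrow_prop M a b c d /\ arrow_prop M b a d c /\
  arrow_prop M c d a b /\ arrow_prop M d c b a.

(* A c-formula satisfied by (a,b) and (c,d) that determines d from c already
   decides a -> b :. c -> d: if it is non-trivial, every d' whose formula set
   contains that of d must satisfy it, hence equals d; if it is trivial, it holds
   of every quadruple, so the structure is a singleton and everything is trivial.
   For a term t the formula t(x,y) = t(a,b) does the job, and the four arrows of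
   a : b :: c : d use t_d, t_c with x and y exchanged, t_b, and t_a with x and y
   exchanged. *)
From Stdlib Require Import Classical FunctionalExtensionality Relation_Operators.

Section Arrows.
Context {L : signature} {M : structure L}.

Lemma arrow_prop_of_determining_formula (a b c d : M) (phi : cformula L M) :
  is_cformula M phi -> sat M (env a b) phi -> sat M (env c d) phi ->
  (forall d', sat M (env c d') phi -> d' = d) -> arrow_prop M a b c d.
Proof.
  intros Hphi Hab Hcd Hdet.
  assert (Hup2 : up2 M a b c d phi) by (split; split; assumption).
  destruct (classic (trivialf M phi)) as [Htriv | Hntriv].
  - left.
    assert (Hsingleton : forall x : M, x = d).
    { intro x. apply Hdet. destruct Htriv as [_ Htriv].
      destruct (Htriv a b c x) as [_ [_ Hx]]. exact Hx. }
    intros psi Hpsi.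
    assert (Hpsi_c : is_cformula M psi) by (destruct Hpsi as [[H _] | [H _]]; exact H).
    assert (Hpsi_dd : sat M (env d d) psi).
    { destruct Hpsi as [[_ H] | [_ H]].
      - rewrite (Hsingleton a), (Hsingleton b) in H. exact H.
      - rewrite (Hsingleton c) in H. exact H. }
    split; [exact Hpsi_c |].
    intros a0 b0 c0 d0.
    rewrite (Hsingleton a0), (Hsingleton b0), (Hsingleton c0), (Hsingleton d0).
    split; split; assumption.
  - right. split.
    + exists phi. split; assumption.
    + intros d' [Hstrict Hsub].
      destruct (Hsub phi Hup2) as [_ [_ Hcd']].
      rewrite (Hdet d' Hcd').
      split; [exact Hstrict | intros psi Hpsi; exact Hpsi].
Qed.

Lemma is_cformula_eq_param {t : term L M} (e : M) :
  (forall v, occ v t <-> v = vx \/ v = vy) -> is_cformula M (FEq t (Par e)).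
Proof.
  intro Ht. split.
  - intro v. simpl. rewrite Ht. tauto.
  - intros v w Hv Hw. apply rt_step. simpl in *. tauto.
Qed.

Lemma arrow_prop_of_term {t : term L M} {a b c d : M} :
  (forall v, occ v t <-> v = vx \/ v = vy) ->
  tA M t a b = tA M t c d ->
  (forall d', d' <> d -> tA M t a b <> tA M t c d') ->
  arrow_prop M a b c d.
Proof.
  intros Ht Habcd Hdet.
  apply arrow_prop_of_determining_formula with (phi := FEq t (Par (tA M t a b))).
  - exact (is_cformula_eq_param _ Ht).
  - reflexivity.
  - symmetry. exact Habcd.
  - intros d' Hd'. apply NNPP. intro Hne.
    apply (Hdet d' Hne). symmetry. exact Hd'.
Qed.

(* Sends x to y and every other variable to x; on the valuations [env] this
   exchanges the values of x and y. *)
Definition swap_xy (n : nat) : nat := match n with 0 => 1 | _ => 0 end.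

Fixpoint swap_vars (t : term L M) : term L M :=
  match t with
  | Var n => Var (swap_xy n)
  | Par p => Par p
  | App f args => App f (fun i => swap_vars (args i))
  end.

Lemma eval_swap_vars (rho : nat -> M) (t : term L M) :
  eval M rho (swap_vars t) = eval M (fun n => rho (swap_xy n)) t.
Proof.
  induction t as [n | p | f args IH]; simpl; auto.
  f_equal. apply functional_extensionality_dep. intro i. apply IH.
Qed.

Lemma tA_swap_vars (t : term L M) (x y : M) : tA M (swap_vars t) x y = tA M t y x.
Proof.
  unfold tA. rewrite eval_swap_vars. f_equal.
  apply functional_extensionality. intros [| [| n]]; reflexivity.
Qed.

Lemma occ_swap_vars (v : nat) (t : term L M) :
  occ v (swap_vars t) <-> exists n, occ n t /\ swap_xy n = v.
Proof.
  induction t as [n | p | f args IH]; simpl.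
  - split; [intro H; exists n; auto | intros [m [-> H]]; exact H].
  - split; [tauto | intros [m [[] _]]].
  - split.
    + intros [i Hi]. apply IH in Hi. destruct Hi as [m [Hm Hv]].
      exists m. split; [exists i; exact Hm | exact Hv].
    + intros [m [[i Hm] Hv]]. exists i. apply IH. exists m. auto.
Qed.

Lemma occ_swap_vars_xy {t : term L M} :
  (forall v, occ v t <-> v = vx \/ v = vy) ->
  forall v, occ v (swap_vars t) <-> v = vx \/ v = vy.
Proof.
  intros Ht v. rewrite occ_swap_vars. unfold vx, vy in *. split.
  - intros [m [Hm <-]]. apply Ht in Hm. destruct Hm as [-> | ->]; simpl; auto.
  - intros [-> | ->].
    + exists 1. split; [apply Ht; auto | reflexivity].
    + exists 0. split; [apply Ht; auto | reflexivity].
Qed.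

Lemma arrow_prop_of_swapped_term {t : term L M} {a b c d : M} :
  (forall v, occ v t <-> v = vx \/ v = vy) ->
  tA M t b a = tA M t d c ->
  (forall d', d' <> d -> tA M t b a <> tA M t d' c) ->
  arrow_prop M a b c d.
Proof.
  intros Ht Habcd Hdet.
  apply (@arrow_prop_of_term (swap_vars t)).
  - exact (occ_swap_vars_xy Ht).
  - rewrite !tA_swap_vars. exact Habcd.
  - intros d' Hne. rewrite !tA_swap_vars. exact (Hdet d' Hne).
Qed.

End Arrows.

Theorem theorem10 (L : signature) (M : structure L) (a b c d : M) :
  (forall t : term L M, cterm M t ->
     tA M t a b = tA M t c d ->
     (forall d' : M, d' <> d -> tA M t a b <> tA M t c d') ->
     arrow_prop M a b c d)
  /\
  (forall ta tb tc td : term L M,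
     cterm M ta -> cterm M tb -> cterm M tc -> cterm M td ->
     tA M ta a b = tA M ta c d ->
     (forall a' : M, a' <> a -> tA M ta a' b <> tA M ta c d) ->
     tA M tb a b = tA M tb c d ->
     (forall b' : M, b' <> b -> tA M tb a b' <> tA M tb c d) ->
     tA M tc a b = tA M tc c d ->
     (forall c' : M, c' <> c -> tA M tc a b <> tA M tc c' d) ->
     tA M td a b = tA M td c d ->
     (forall d' : M, d' <> d -> tA M td a b <> tA M td c d') ->
     analogy M a b c d).
Proof.
  split.
  - intros t [_ Ht]. exact (arrow_prop_of_term Ht).
  - intros ta tb tc td [_ Hta] [_ Htb] [_ Htc] [_ Htd] Ea Ua Eb Ub Ec Uc Ed Ud.
    split; [| split; [| split]].
    + exact (arrow_prop_of_term Htd Ed Ud).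
    + exact (arrow_prop_of_swapped_term Htc Ec Uc).
    + apply (arrow_prop_of_term Htb (eq_sym Eb)).
      intros b' Hne Heq. exact (Ub b' Hne (eq_sym Heq)).
    + apply (arrow_prop_of_swapped_term Hta (eq_sym Ea)).
      intros a' Hne Heq. exact (Ua a' Hne (eq_sym Heq)).
Qed.
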